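(* In the setting below, suppose that $x\mapsto f(x)+g(Ax)$ is bounded below and $\{x: x\in\operatorname{ri}(\operatorname{dom}f),\ Ax\in\operatorname{ri}(\operatorname{dom}g),\ Bx=b\}\ne\emptyset$ (''$\operatorname{ri}$'' omitted for polyhedral $f$ or $g$). Let $w^*=[y^*;z^*]$ be a local minimizer of $\Xi(w)+\Psi_{0,\mu}(z)$ (for some $\mu>0$), let $T_*=\{i:z^*_i\ne0\}$, $\bar T_*=[r]\setminus T_*$, let $$\Omega_0:=\operatorname{argmin}_{w=[y;z]}\{\Xi(w):\ z_{\bar T_*}=0\},$$ and assume $w^*\in\operatorname{argmin}\{\|z\|_0:\ w=[y;z]\in\Omega_0\}$. Define $\xi_0:=\min_w\{\Xi(w): z_{\bar T_*}=0\}$, $\xi_1:=\min_{S\subsetneq T_*}\min_w\{\Xi(w): z_{\bar S}=0\}$, $\xi_2:=\min_{S\not\subseteq T_*}\min_w\{\Xi(w): z_{\bar S}=0\}$ (a minimum over an empty family of index sets being $+\infty$). If $\mu'\in\mathbb R^r$, $\mu'>0$, satisfies $\sum_{i\in T_*}\mu'_i\le\xi_1-\xi_0$ and $\mu'_j>\max\{\xi_1-\xi_2,0\}$ for all $j\in\bar T_*$, then $w^*$ is a global minimizer of $\Xi(w)+\Psi_{0,\mu'}(z)$.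
   Context: Let $f:\mathbb R^n\to(-\infty,\infty]$, $g:\mathbb R^m\to(-\infty,\infty]$ be proper, lsc and convex with conjugates $f^*,g^*$; $A\in\mathbb R^{m\times n}$, $B\in\mathbb R^{r\times n}$, $b\in\mathbb R^r$. For $w=[y;z]\in\mathbb R^m\times\mathbb R^r$, $\Xi(w)=f^*(-A^\top y-B^\top z)+g^*(y)+\langle b,z\rangle$; $\Psi_{0,\mu}(z)=\sum_{i=1}^r\mu_i\mathbf 1_{\{z_i\ne0\}}$. $\|z\|_0$ is the number of nonzero entries of $z$; $[r]=\{1,\dots,r\}$, $\bar S=[r]\setminus S$, $z_S$ the subvector indexed by $S$. $\operatorname{ri}$ denotes relative interior. *)

From HB Require Import structures.
From mathcomp Require Import all_boot all_order all_algebra.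
From mathcomp Require Import all_classical all_reals ereal.
Set Implicit Arguments. Unset Strict Implicit. Unset Printing Implicit Defensive.
Import Order.TTheory GRing.Theory Num.Theory.
Local Open Scope ring_scope.
Local Open Scope classical_set_scope.

Section Defs.
Variable R : realType.

Definition dotv (n : nat) (u x : 'cV[R]_n) : R := \sum_(i < n) u i 0 * x i 0.

Definition normv (n : nat) (x : 'cV[R]_n) : R := Num.sqrt (dotv x x).

Definition edom (n : nat) (f : 'cV[R]_n -> \bar R) : set 'cV[R]_n :=
  [set x | (f x < +oo)%E].

Definition proper_fun (n : nat) (f : 'cV[R]_n -> \bar R) : Prop :=
  (forall x, f x != -oo%E) /\ (exists x, (f x < +oo)%E).

(* convex: the epigraph is convex *)
Definition convex_fun (n : nat) (f : 'cV[R]_n -> \bar R) : Prop :=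
  forall (x y : 'cV[R]_n) (a c t : R), 0 <= t <= 1 ->
    (f x <= a%:E)%E -> (f y <= c%:E)%E ->
    (f (t *: x + (1 - t) *: y)%R <= (t * a + (1 - t) * c)%R%:E)%E.

Definition lsc_fun (n : nat) (f : 'cV[R]_n -> \bar R) : Prop :=
  forall (x : 'cV[R]_n) (a : R), (a%:E < f x)%E ->
    exists2 e : R, 0 < e & forall x', normv (x' - x) < e -> (a%:E < f x')%E.

Definition fconj (n : nat) (f : 'cV[R]_n -> \bar R) (u : 'cV[R]_n) : \bar R :=
  ereal_sup [set ((dotv u x)%:E - f x)%E | x in setT].

Definition aff_hull (n : nat) (C : set 'cV[R]_n) : set 'cV[R]_n :=
  [set y | exists (k : nat) (p : 'I_k -> 'cV[R]_n) (l : 'I_k -> R),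
     [/\ forall i, C (p i), \sum_(i < k) l i = 1 & y = \sum_(i < k) l i *: p i]].

Definition rel_int (n : nat) (C : set 'cV[R]_n) : set 'cV[R]_n :=
  [set x | C x /\ exists2 e : R, 0 < e &
     forall y, aff_hull C y -> normv (y - x) < e -> C y].

(* polyhedral (convex) function: its epigraph is a polyhedron, i.e. a finite
   intersection of closed half-spaces of R^n x R *)
Definition polyhedral_fun (n : nat) (f : 'cV[R]_n -> \bar R) : Prop :=
  exists (k : nat) (a : 'I_k -> 'cV[R]_n) (c d : 'I_k -> R),
    forall (x : 'cV[R]_n) (t : R),
      (f x <= t%:E)%E <-> (forall i, dotv (a i) x + c i * t <= d i).

Definition Xi (n m r : nat) (f : 'cV[R]_n -> \bar R) (g : 'cV[R]_m -> \bar R)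
  (A : 'M[R]_(m, n)) (B : 'M[R]_(r, n)) (b : 'cV[R]_r)
  (y : 'cV[R]_m) (z : 'cV[R]_r) : \bar R :=
  (fconj f (- (A^T *m y) - (B^T *m z))%R + fconj g y + (dotv b z)%:E)%E.

Definition supp (r : nat) (z : 'cV[R]_r) : {set 'I_r} := [set i | z i 0 != 0].
Definition l0 (r : nat) (z : 'cV[R]_r) : nat := #|supp z|.

Definition Psi0 (r : nat) (mu : 'cV[R]_r) (z : 'cV[R]_r) : \bar R :=
  (\sum_(i < r) mu i 0 * (z i 0 != 0)%:R)%:E.

Definition zero_off (r : nat) (S : {set 'I_r}) (z : 'cV[R]_r) : Prop :=
  forall i, i \notin S -> z i 0 = 0.

Definition Xi_min_on (n m r : nat) f g A B b (S : {set 'I_r}) : \bar R :=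
  ereal_inf [set @Xi n m r f g A B b wz.1 wz.2 | wz in [set wz | zero_off S wz.2]].

Definition Omega (n m r : nat) f g A B b (S : {set 'I_r}) :
    set ('cV[R]_m * 'cV[R]_r) :=
  [set w | zero_off S w.2 /\
     forall w', zero_off S w'.2 -> (@Xi n m r f g A B b w.1 w.2 <= Xi f g A B b w'.1 w'.2)%E].

(* min over a family of index sets of Xi_min_on; the empty family gives +oo *)
Definition Xi_min_fam (n m r : nat) f g A B b (P : {set 'I_r} -> Prop) : \bar R :=
  ereal_inf [set @Xi_min_on n m r f g A B b S | S in P].

Definition local_min (m r : nat) (F : 'cV[R]_m -> 'cV[R]_r -> \bar R)
  (y0 : 'cV[R]_m) (z0 : 'cV[R]_r) : Prop :=
  exists2 e : R, 0 < e & forall y z,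
    normv (y - y0) ^+ 2 + normv (z - z0) ^+ 2 < e ^+ 2 -> (F y0 z0 <= F y z)%E.

Definition global_min (m r : nat) (F : 'cV[R]_m -> 'cV[R]_r -> \bar R)
  (y0 : 'cV[R]_m) (z0 : 'cV[R]_r) : Prop :=
  forall y z, (F y0 z0 <= F y z)%E.

End Defs.

From HB Require Import structures.
From mathcomp Require Import all_boot all_order all_algebra.
From mathcomp Require Import all_classical all_reals ereal.
From mathcomp Require Import lra.
Set Implicit Arguments. Unset Strict Implicit. Unset Printing Implicit Defensive.
Import Order.TTheory GRing.Theory Num.Theory.
Local Open Scope ring_scope.
Local Open Scope classical_set_scope.

(* Compare the two penalized values through the support S of an arbitrary
   competitor [y; z]. If S = T*, optimality of w* on Omega_0 suffices. If S is
   a proper subset of T*, then Xi(y, z) >= xi1 >= xi0 + sum_(T* ) mu' and the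
   penalty of z is nonnegative. Otherwise some j in S lies outside T*, so
   Xi(y, z) + mu'_j >= xi2 + mu'_j > xi1, and again xi1 dominates the
   penalized value of w*. *)

Section ExtendedRealGaps.
Variable R : realType.
Local Open Scope ereal_scope.

Lemma leeD_le_gap (a c d : \bar R) (s : R) :
  a <= c -> s%:E <= d - c -> a + s%:E <= d.
Proof.
by case: a c d => [a| |] [c| |] [d| |] //=;
  rewrite ?lee_fin ?leey ?leNye //; lra.
Qed.

Lemma lteBlD_le (d e : \bar R) (s : R) : d - e < s%:E -> d <= e + s%:E.
Proof.
by case: d e => [d| |] [e| |] //=; rewrite ?lee_fin ?lte_fin ?leey ?leNye //; lra.
Qed.

End ExtendedRealGaps.

Section SupportRestrictedMinima.
Variables (R : realType) (n m r : nat).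
Variables (f : 'cV[R]_n -> \bar R) (g : 'cV[R]_m -> \bar R).
Variables (A : 'M[R]_(m, n)) (B : 'M[R]_(r, n)) (b : 'cV[R]_r).

Lemma Psi0_supp (mu z : 'cV[R]_r) : Psi0 mu z = (\sum_(i in supp z) mu i 0)%:E.
Proof.
rewrite /Psi0 [in RHS]big_mkcond; congr EFin; apply: eq_bigr => i _.
by rewrite inE; case: (z i 0 != 0); rewrite ?mulr1 ?mulr0.
Qed.

Lemma zero_off_supp (z : 'cV[R]_r) : zero_off (supp z) z.
Proof. by move=> i; rewrite inE negbK => /eqP. Qed.

Lemma Xi_min_fam_le (P : {set 'I_r} -> Prop) S y z :
  P S -> zero_off S z -> (Xi_min_fam f g A B b P <= Xi f g A B b y z)%E.
Proof.
move=> PS zS; apply: le_trans (ereal_inf_lbound _) _; first by exists S.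
by apply: ereal_inf_lbound; exists (y, z).
Qed.

Lemma Omega_le_Xi_min_on S w :
  Omega f g A B b S w -> (Xi f g A B b w.1 w.2 <= Xi_min_on f g A B b S)%E.
Proof. by move=> [_ wmin]; apply: le_ereal_inf_tmp => _ [w' /wmin + <-]. Qed.

End SupportRestrictedMinima.

Lemma ler_sum_nneg_term (R : numDomainType) (I : finType) (F : I -> R)
    (S : {set I}) j :
  (forall i, 0 <= F i) -> j \in S -> F j <= \sum_(i in S) F i.
Proof. by move=> F_ge0 jS; rewrite (bigD1 j) //= lerDl sumr_ge0. Qed.

Theorem mainTheorem19 (R : realType) (n m r : nat)
  (f : 'cV[R]_n -> \bar R) (g : 'cV[R]_m -> \bar R)
  (A : 'M[R]_(m, n)) (B : 'M[R]_(r, n)) (b : 'cV[R]_r)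
  (y0 : 'cV[R]_m) (z0 : 'cV[R]_r) (mu mu' : 'cV[R]_r) :
  proper_fun f -> convex_fun f -> lsc_fun f ->
  proper_fun g -> convex_fun g -> lsc_fun g ->
  (exists M : R, forall x, (M%:E <= f x + g (A *m x))%E) ->
  (exists x : 'cV[R]_n,
     [/\ rel_int (edom f) x \/ (polyhedral_fun f /\ edom f x),
         rel_int (edom g) (A *m x) \/ (polyhedral_fun g /\ edom g (A *m x))
       & B *m x = b]) ->
  (forall i, 0 < mu i 0) ->
  local_min (fun y z => (Xi f g A B b y z + Psi0 mu z)%E) y0 z0 ->
  let T := supp z0 in
  (Omega f g A B b T (y0, z0) /\
   forall w, Omega f g A B b T w -> (l0 z0 <= l0 w.2)%N) ->
  let xi0 := Xi_min_on f g A B b T in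
  let xi1 := Xi_min_fam f g A B b (fun S => S \proper T) in
  let xi2 := Xi_min_fam f g A B b (fun S => ~~ (S \subset T)) in
  (forall i, 0 < mu' i 0) ->
  ((\sum_(i in T) mu' i 0)%:E <= xi1 - xi0)%E ->
  (forall j, j \notin T -> (maxe (xi1 - xi2) 0 < (mu' j 0)%:E)%E) ->
  global_min (fun y z => (Xi f g A B b y z + Psi0 mu' z)%E) y0 z0.
Proof.
move=> _ _ _ _ _ _ _ _ _ _ T [w0_opt _] xi0 xi1 xi2 mu'_gt0 gap_T gap_out y z /=.
rewrite !Psi0_supp; set S := supp z.
have zS : zero_off S z by exact: zero_off_supp.
have pen0_le_xi1 : (Xi f g A B b y0 z0 + (\sum_(i in T) mu' i 0)%:E <= xi1)%E.
  exact: leeD_le_gap (Omega_le_Xi_min_on w0_opt) gap_T.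
have [ST|/subsetPn[j jS jT]] := boolP (S \subset T).
- have [eST|neST] := eqVneq S T.
    rewrite eST in zS *; apply: leeD => //.
    by case: w0_opt => _ /(_ (y, z)); apply.
  apply: le_trans pen0_le_xi1 _; apply: le_trans (leeDl _ _); last first.
    by rewrite lee_fin sumr_ge0 // => i _; exact: ltW.
  by apply: Xi_min_fam_le zS; rewrite finset.properEneq neST.
- have xi1_le : (xi1 <= xi2 + (mu' j 0)%:E)%E.
    by apply: lteBlD_le; apply: le_lt_trans (gap_out j jT); rewrite le_max lexx.
  apply: le_trans pen0_le_xi1 (le_trans xi1_le _); apply: leeD.
    by apply: Xi_min_fam_le zS; apply/subsetPn; exists j.
  by rewrite lee_fin; apply: (ler_sum_nneg_term (F := fun i => mu' i 0)) => // i; exact: ltW.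
Qed.
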